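(* Let $A\in {\operatorname{\mathsf{TPD}}}_n(\mathbb{S}_{\max}^\vee)$, and set $\gamma_{i}=a_{ii}$ for $i\in [n]$. Assume that $\gamma_{1}\succeq \gamma_{2} \succeq \cdots \succeq \gamma_{n}$, and define $B_k=\gamma_k I\ominus A$ for some $k \in [n]$. Then, all the diagonal entries of $(B_k)^{\mathrm{adj}}$ are non-zero and they are all in $\mathbb{S}_{\max}^\circ$ except possibly the $k$-th diagonal entry, which is also in $\mathbb{S}_{\max}^\circ$ if and only if $\gamma_k$ is not a simple $\mathbb{S}_{\max}$-eigenvalue.
   Context: $\mathbb{S}_{\max}$ is the symmetrized tropical semiring over a divisible totally ordered abelian group, with zero $\mathbf{0}$, unit $\mathbf{1}$, minus $\ominus$; $\mathbb{S}_{\max}^\vee$ is the set of signed elements and $\mathbb{S}_{\max}^\circ$ the set of balanced elements ($c\ominus c$). $a\preceq b$ iff $b=a\oplus b$. $A\in{\operatorname{\mathsf{TPD}}}_n(\mathbb{S}_{\max}^\vee)$: $A$ symmetric with signed entries, $\mathbf{0}<a_{ii}$ and $a_{ij}^2<a_{ii}a_{jj}$ for $i\ne j$ (where $a<b$ iff $b\ominus a$ is positive). $(M^{\mathrm{adj}})_{ij}=(\ominus\mathbf{1})^{i+j}\det M[\hat j,\hat i]$ with the signed determinant. The $\mathbb{S}_{\max}$-eigenvalues of $A$ are its diagonal entries, counted with multiplicity; $\gamma_k$ is simple iff it occurs once, i.e. $\gamma_{k-1}\succ\gamma_k\succ\gamma_{k+1}$ (convention $\gamma_{n+1}=\mathbf{0}$,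 and $a\succ b$ means $b\preceq a$, $a\ne b$). *)

From HB Require Import structures.
From mathcomp Require Import all_boot all_order all_algebra all_fingroup.
Set Implicit Arguments. Unset Strict Implicit. Unset Printing Implicit Defensive.
Import Order.TTheory GRing.Theory Num.Theory.
Local Open Scope ring_scope.

Definition divisible_toag (G : porderZmodType) : Prop :=
  [/\ (forall x y : G, (x <= y) || (y <= x)),
      (forall x y z : G, x <= y -> x + z <= y + z) &
      (forall (x : G) (m : nat), (0 < m)%N -> exists y : G, y *+ m = x)].

Inductive ssign := Spos | Sneg | Sbal.

Definition ssign_eqb (s t : ssign) : bool :=
  match s, t with
  | Spos, Spos | Sneg, Sneg | Sbal, Sbal => true
  | _, _ => false end.

Definition ssign_mul (s t : ssign) : ssign :=
  match s, t with
  | Sbal, _ | _, Sbal => Sbal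
  | Spos, Spos | Sneg, Sneg => Spos
  | _, _ => Sneg end.

Definition ssign_opp (s : ssign) : ssign :=
  match s with Spos => Sneg | Sneg => Spos | Sbal => Sbal end.

Section Smax.
Variable G : porderZmodType.

(* SZero = the tropical zero (-oo); SElt Spos a = a, SElt Sneg a = (-) a,
   SElt Sbal a = a^o (balanced), with modulus a in G. *)
Inductive smax := SZero | SElt of ssign & G.

Definition sadd (x y : smax) : smax :=
  match x, y with
  | SZero, _ => y
  | _, SZero => x
  | SElt s a, SElt t b =>
      if a < b then y else if b < a then x
      else if ssign_eqb s t then x else SElt Sbal a
  end.

Definition smul (x y : smax) : smax :=
  match x, y with
  | SElt s a, SElt t b => SElt (ssign_mul s t) (a + b)
  | _, _ => SZero end.

Definition sopp (x : smax) : smax :=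
  match x with SZero => SZero | SElt s a => SElt (ssign_opp s) a end.

Definition sone : smax := SElt Spos 0.

Definition ssub (x y : smax) : smax := sadd x (sopp y).

Definition spow (x : smax) (m : nat) : smax := iter m (smul x) sone.

Definition spositive (x : smax) : Prop := exists a, x = SElt Spos a.

Definition slt (x y : smax) : Prop := spositive (ssub y x).

Definition spreceq (x y : smax) : Prop := y = sadd x y.

Definition ssigned (x : smax) : Prop := x = SZero \/ exists a, x = SElt Spos a \/ x = SElt Sneg a.

Definition sbalanced (x : smax) : Prop := exists c, x = ssub c c.

Definition sdet (n : nat) (M : 'M[smax]_n) : smax :=
  \big[sadd/SZero]_(s : 'S_n)
     smul (if odd_perm s then sopp sone else sone)
          (\big[smul/sone]_(i < n) M i (s i)).

Definition sadj (n : nat) (M : 'M[smax]_n) : 'M[smax]_n :=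
  \matrix_(i < n, j < n)
     smul (spow (sopp sone) (i + j)) (sdet (row' j (col' i M))).

Definition sTPD (n : nat) (A : 'M[smax]_n) : Prop :=
  [/\ forall i j, A i j = A j i,
      forall i j, ssigned (A i j),
      forall i, slt SZero (A i i) &
      forall i j, i != j -> slt (smul (A i j) (A i j)) (smul (A i i) (A j j))].

Definition sshift (n : nat) (g : smax) (A : 'M[smax]_n) : 'M[smax]_n :=
  \matrix_(i < n, j < n) ssub (if i == j then g else SZero) (A i j).

(* gamma_k = a_kk is a simple S_max-eigenvalue: it occurs once among the
   diagonal entries (the eigenvalues counted with multiplicity). *)
Definition ssimple_eig (n : nat) (A : 'M[smax]_n) (k : 'I_n) : Prop :=
  forall i, A i i = A k k -> i = k.

End Smax.
Arguments SZero {G}.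

From mathcomp Require Import all_boot all_order all_algebra all_fingroup.
Set Implicit Arguments. Unset Strict Implicit. Unset Printing Implicit Defensive.
Import Order.TTheory GRing.Theory Num.Theory.
Local Open Scope ring_scope.

(* Deleting row and column i of B = gamma_k I (-) A leaves a matrix whose
   diagonal entries gamma_k (-) gamma_l have modulus at least |gamma_l|, while
   positive definiteness gives |a_jl|^2 < |gamma_j| |gamma_l| off the diagonal.
   So in the signed determinant of this principal minor the identity
   permutation strictly dominates all others, and the i-th diagonal entry of
   B^adj is the product of the gamma_k (-) gamma_l over l <> i: it is nonzero,
   and balanced exactly when gamma_l = gamma_k for some l <> i.  For i <> k the
   factor l = k is balanced; for i = k this says that gamma_k is repeated.
   Neither the ordering of the gamma's nor the divisibility of the group
   plays a role. *)

Section OrderedGroup.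
Variable G : porderZmodType.
Hypothesis le_total : forall x y : G, (x <= y) || (y <= x).
Hypothesis lerD2r : forall x y z : G, x <= y -> x + z <= y + z.

Lemma og_lerD (x y z w : G) : x <= y -> z <= w -> x + z <= y + w.
Proof.
move=> le_xy le_zw; apply: le_trans (lerD2r z le_xy) _.
by rewrite !(addrC y); exact: lerD2r.
Qed.

Lemma og_ltrD2r (x y z : G) : x < y -> x + z < y + z.
Proof.
rewrite !lt_neqAle => /andP[neq_xy le_xy]; rewrite lerD2r // andbT.
by apply: contra neq_xy => /eqP/addIr ->.
Qed.

Lemma og_ltr_leD (x y z w : G) : x < y -> z <= w -> x + z < y + w.
Proof.
move=> lt_xy le_zw; apply: lt_le_trans (og_ltrD2r z lt_xy) _.
by rewrite !(addrC y); exact: lerD2r.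
Qed.

Lemma og_ltr_Mn2 (x y : G) : x *+ 2 < y *+ 2 -> x < y.
Proof.
case: (comparable_ltgtP (le_total x y)) => // [lt_yx|->]; last by rewrite ltxx.
by rewrite !mulr2n => /lt_trans/(_ (og_ltr_leD lt_yx (ltW lt_yx))); rewrite ltxx.
Qed.

Lemma og_ler_sum (I : Type) (r : seq I) (P : pred I) (F H : I -> G) :
  (forall i, F i <= H i) -> \sum_(i <- r | P i) F i <= \sum_(i <- r | P i) H i.
Proof. by move=> le_FH; apply: (big_ind2 (fun x y => x <= y)) => // *; exact: og_lerD. Qed.

Lemma og_ltr_sum (I : finType) (F H : I -> G) (i0 : I) :
  (forall i, F i <= H i) -> F i0 < H i0 -> \sum_i F i < \sum_i H i.
Proof.
move=> le_FH lt_i0; rewrite (bigD1 i0) //= [X in _ < X](bigD1 i0) //=.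
by apply: og_ltr_leD lt_i0 _; exact: og_ler_sum.
Qed.

End OrderedGroup.

Section SmaxArith.
Variable G : porderZmodType.
Implicit Types (x y : smax G) (a b c d : G).

(* On the tropical zero [SZero], whose modulus is -oo, [smod] and [ssgn] return
   junk; [sbelow a x] says that x is negligible against modulus a. *)
Definition smod x : G := if x is SElt _ a then a else 0.
Definition ssgn x : ssign := if x is SElt s _ then s else Spos.
Definition snonzero x : bool := if x is SElt _ _ then true else false.
Definition sbelow a x : bool := if x is SElt _ b then b < a else true.

Lemma saddx0 x : sadd x SZero = x. Proof. by case: x. Qed.
Lemma smulx0 x : smul x SZero = SZero. Proof. by case: x. Qed.
Lemma smul1x x : smul (sone G) x = x.
Proof. by case: x => // s a; rewrite /= add0r; case: s. Qed.

Lemma sadd_below_l s a y : sbelow a y -> sadd (SElt s a) y = SElt s a.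
Proof. by case: y => //= t b lt_ba; rewrite (lt_gtF lt_ba) lt_ba. Qed.

Lemma sadd_below_r s a y : sbelow a y -> sadd y (SElt s a) = SElt s a.
Proof. by case: y => //= t b ->. Qed.

Lemma sadd_idem s a : sadd (SElt s a) (SElt s a) = SElt s a.
Proof. by rewrite /= ltxx; case: s. Qed.

Lemma sadd_below a x y : sbelow a x -> sbelow a y -> sbelow a (sadd x y).
Proof.
case: x => // s b; case: y => //= t b' lt_ba lt_b'a.
by case: ifP => // _; case: ifP => // _; case: ifP.
Qed.

Lemma big_sadd_max (I : eqType) (r : seq I) (F : I -> smax G) i0 s a :
  i0 \in r -> F i0 = SElt s a -> (forall i, i != i0 -> sbelow a (F i)) ->
  \big[@sadd G/SZero]_(i <- r) F i = SElt s a.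
Proof.
move=> r_i0 F_i0 F_below.
suff : if i0 \in r then \big[@sadd G/SZero]_(i <- r) F i = SElt s a
       else sbelow a (\big[@sadd G/SZero]_(i <- r) F i) by rewrite r_i0.
elim: r {r_i0} => [|x r IHr]; first by rewrite big_nil.
rewrite big_cons in_cons; have [<-|neq_i0x] /= := eqVneq i0 x.
  by rewrite F_i0; case: (i0 \in r) IHr => [->|]; [exact: sadd_idem|exact: sadd_below_l].
have F_x : sbelow a (F x) by apply: F_below; rewrite eq_sym.
by case: (i0 \in r) IHr => [->|]; [exact: sadd_below_r|exact: sadd_below].
Qed.

Lemma big_smul_nonzero (I : Type) (r : seq I) (F : I -> smax G) :
  all (fun i => snonzero (F i)) r ->
  \big[@smul G/sone G]_(i <- r) F i =
  SElt (\big[ssign_mul/Spos]_(i <- r) ssgn (F i)) (\sum_(i <- r) smod (F i)).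
Proof.
elim: r => [|x r IHr]; first by rewrite !big_nil.
by rewrite /= !big_cons => /andP[]; case: (F x) => // s a _ /IHr ->.
Qed.

Lemma big_smul_zero (I : Type) (r : seq I) (F : I -> smax G) :
  ~~ all (fun i => snonzero (F i)) r -> \big[@smul G/sone G]_(i <- r) F i = SZero.
Proof.
elim: r => [|x r IHr] //; rewrite /= big_cons negb_and.
by case/orP => [|/IHr ->]; [case: (F x) | exact: smulx0].
Qed.

Lemma ssign_mul_bal s t : ssign_mul s t = Sbal <-> s = Sbal \/ t = Sbal.
Proof. by case: s; case: t; split=> //= h; first [by left | by right | by case: h]. Qed.

Lemma big_ssign_mul_bal (I : eqType) (r : seq I) (f : I -> ssign) :
  \big[ssign_mul/Spos]_(i <- r) f i = Sbal <-> exists2 i, i \in r & f i = Sbal.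
Proof.
elim: r => [|x r IHr]; first by rewrite big_nil; split=> // -[].
rewrite big_cons; split.
  case/ssign_mul_bal => [f_x|/IHr[i r_i f_i]]; first by exists x; rewrite ?mem_head.
  by exists i; rewrite // in_cons r_i orbT.
case=> i; rewrite in_cons => /orP[/eqP-> f_x|r_i f_i]; apply/ssign_mul_bal; first by left.
by right; apply/IHr; exists i.
Qed.

Lemma sbalancedE s a : sbalanced (SElt s a) <-> s = Sbal.
Proof.
split; last by move->; exists (SElt Spos a); rewrite /ssub /= ltxx.
by case=> [[|t b]] //=; rewrite ltxx; case: t => /= -[].
Qed.

Lemma sbalanced_ssgn x : snonzero x -> sbalanced x <-> ssgn x = Sbal.
Proof. by case: x => // s a _; exact: sbalancedE. Qed.

Lemma sbalanced_big_smul (I : eqType) (r : seq I) (F : I -> smax G) :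
  all (fun i => snonzero (F i)) r ->
  sbalanced (\big[@smul G/sone G]_(i <- r) F i) <-> exists2 i, i \in r & sbalanced (F i).
Proof.
move=> nz_F; rewrite big_smul_nonzero //; apply: (iff_trans (sbalancedE _ _)).
apply: (iff_trans (big_ssign_mul_bal _ _)).
by split=> -[i r_i bal_i]; exists i => //; apply/(sbalanced_ssgn (allP nz_F i r_i)).
Qed.

Lemma spow_sopp1_double p : spow (sopp (sone G)) (p + p) = sone G.
Proof.
rewrite addnn; elim: p => [|p IHp] //.
by rewrite doubleS /spow !iterS -/(spow _ _) IHp /= !addr0.
Qed.

Lemma sadj_diag m (M : 'M[smax G]_m) i : sadj M i i = sdet (row' i (col' i M)).
Proof. by rewrite mxE spow_sopp1_double smul1x. Qed.

Lemma sbelow_smul_sign (b : bool) a x :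
  sbelow a (smul (if b then sopp (sone G) else sone G) x) = sbelow a x.
Proof. by case: b; case: x => //= s c; rewrite add0r. Qed.

Lemma ssub0x x : ssub SZero x = sopp x. Proof. by case: x. Qed.
Lemma smod_sopp x : smod (sopp x) = smod x. Proof. by case: x. Qed.
Lemma snonzero_sopp x : snonzero (sopp x) = snonzero x. Proof. by case: x. Qed.

Lemma slt_pos a b : slt (SElt Spos a) (SElt Spos b) -> a < b.
Proof. by rewrite /slt /spositive /=; case: ifP => [_ [? //]|_]; case: ifP => // _ [? //]. Qed.

Lemma snonzero_ssub_pos c d : snonzero (ssub (SElt Spos c) (SElt Spos d)).
Proof. by rewrite /=; case: ifP => // _; case: ifP => // _; case: ifP. Qed.

Hypothesis le_total : forall a b : G, (a <= b) || (b <= a).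

Lemma le_smod_ssub_pos c d : d <= smod (ssub (SElt Spos c) (SElt Spos d)).
Proof.
rewrite /=; case: (comparable_ltgtP (le_total c d)) => [||->] /=.
- by rewrite lexx.
- by move/ltW.
- by rewrite lexx.
Qed.

Lemma ssub_pos_balanced c d : sbalanced (ssub (SElt Spos c) (SElt Spos d)) <-> d = c.
Proof.
rewrite /=; case: (comparable_ltgtP (le_total c d)) => [lt_cd|lt_dc|->] /=.
- by split=> [/sbalancedE //|eq_dc]; rewrite eq_dc ltxx in lt_cd.
- by split=> [/sbalancedE //|eq_dc]; rewrite eq_dc ltxx in lt_dc.
- by split=> // _; exact/sbalancedE.
Qed.

End SmaxArith.

Section DominantDiagonal.
Variables (G : porderZmodType) (m : nat) (M : 'M[smax G]_m).
Hypothesis le_total : forall x y : G, (x <= y) || (y <= x).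
Hypothesis lerD2r : forall x y z : G, x <= y -> x + z <= y + z.
Hypothesis diag_nonzero : forall j, snonzero (M j j).
Hypothesis offdiag_small : forall j l, j != l -> snonzero (M j l) ->
  smod (M j l) *+ 2 < smod (M j j) + smod (M l l).

Lemma perm_term_below (s : 'S_m) : s != 1%g ->
  sbelow (\sum_j smod (M j j)) (\big[@smul G/sone G]_j M j (s j)).
Proof.
move=> s_neq1.
have [nz_Ms|] := boolP (all (fun j => snonzero (M j (s j))) (index_enum 'I_m)); last first.
  by move/big_smul_zero ->.
rewrite big_smul_nonzero //=; apply: og_ltr_Mn2 => //.
have [j0 /= moved_j0|fixed] := pickP (fun j => s j != j); last first.
  by case/eqP: s_neq1; apply/permP => j; rewrite perm1; apply/eqP/negbFE/fixed.
have lt_moved j : s j != j -> smod (M j (s j)) *+ 2 < smod (M j j) + smod (M (s j) (s j)).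
  move=> moved_j; apply: offdiag_small; first by rewrite eq_sym.
  by move/allP: nz_Ms; apply; exact: mem_index_enum.
have le_all j : smod (M j (s j)) *+ 2 <= smod (M j j) + smod (M (s j) (s j)).
  by have [->|/lt_moved/ltW //] := eqVneq (s j) j; rewrite mulr2n.
have -> : (\sum_j smod (M j j)) *+ 2 = \sum_j (smod (M j j) + smod (M (s j) (s j))).
  by rewrite big_split mulr2n; congr (_ + _); apply: reindex_inj; exact: perm_inj.
by rewrite -sumrMnl; apply: (og_ltr_sum lerD2r (i0 := j0)) => //; exact: lt_moved.
Qed.

Lemma sdet_dominant_diag : sdet M = \big[@smul G/sone G]_j M j j.
Proof.
have diag_prod : \big[@smul G/sone G]_j M j j =
    SElt (\big[ssign_mul/Spos]_j ssgn (M j j)) (\sum_j smod (M j j)).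
  by apply: big_smul_nonzero; apply/allP => j _; exact: diag_nonzero.
rewrite diag_prod /sdet; apply: (big_sadd_max (i0 := 1%g)) => [||s s_neq1].
- exact: mem_index_enum.
- by rewrite odd_perm1 smul1x -diag_prod; apply: eq_bigr => j _; rewrite perm1.
- by rewrite sbelow_smul_sign; exact: perm_term_below.
Qed.

End DominantDiagonal.

Section ShiftedTPD.
Variables (G : porderZmodType) (n : nat) (A : 'M[smax G]_n).
Hypothesis le_total : forall x y : G, (x <= y) || (y <= x).
Hypothesis lerD2r : forall x y z : G, x <= y -> x + z <= y + z.
Hypothesis tpd : sTPD A.

Lemma sTPD_diag l : A l l = SElt Spos (smod (A l l)).
Proof. by case: tpd => _ _ pos _; case: (pos l) => a; rewrite /ssub /= saddx0 => ->. Qed.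

Lemma sTPD_offdiag l l' : l != l' -> snonzero (A l l') ->
  smod (A l l') *+ 2 < smod (A l l) + smod (A l' l').
Proof.
case: tpd => _ signed _ dominated neq_ll' nz_A.
move: (dominated l l' neq_ll'); rewrite [A l l]sTPD_diag [A l' l']sTPD_diag /=.
by case: (signed l l') nz_A => [->|[b [->|->]]] //= _ /slt_pos; rewrite mulr2n.
Qed.

Lemma not_ssimple_eig k :
  ~ ssimple_eig A k <-> exists2 l, l != k & smod (A l l) = smod (A k k).
Proof.
split=> [not_simple|[l neq_lk eq_lk] simple]; last first.
  by move: neq_lk; rewrite (simple l) ?eqxx // sTPD_diag eq_lk -sTPD_diag.
have [l /andP[neq_lk /eqP eq_lk]|none] := pickP (fun l => (l != k) && (smod (A l l) == smod (A k k))).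
  by exists l.
case: not_simple => l; rewrite [A l l]sTPD_diag [A k k]sTPD_diag => -[eq_lk].
by apply/eqP; move: (none l); rewrite eq_lk eqxx andbT => /negbFE.
Qed.

Variable c : G.

Lemma sdet_minor_sshift i :
  sdet (row' i (col' i (sshift (SElt Spos c) A))) =
  \big[@smul G/sone G]_j ssub (SElt Spos c) (SElt Spos (smod (A (lift i j) (lift i j)))).
Proof.
rewrite sdet_dominant_diag //.
- by apply: eq_bigr => j _; rewrite !mxE eqxx [A _ _]sTPD_diag.
- by move=> j; rewrite !mxE eqxx [A _ _]sTPD_diag; exact: snonzero_ssub_pos.
move=> j l neq_jl; rewrite !mxE !eqxx (inj_eq (@lift_inj _ i)) (negbTE neq_jl).
rewrite ssub0x smod_sopp snonzero_sopp (sTPD_diag (lift i j)) (sTPD_diag (lift i l)).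
move=> nz_A; apply: lt_le_trans (sTPD_offdiag _ nz_A) _.
  by rewrite (inj_eq (@lift_inj _ i)).
by apply: og_lerD => //; exact: le_smod_ssub_pos.
Qed.

Lemma sadj_sshift_diag_neq0 i : sadj (sshift (SElt Spos c) A) i i <> SZero.
Proof.
rewrite sadj_diag sdet_minor_sshift big_smul_nonzero //.
by apply/allP => j _; exact: snonzero_ssub_pos.
Qed.

Lemma sadj_sshift_diag_balanced i :
  sbalanced (sadj (sshift (SElt Spos c) A) i i) <-> exists2 l, l != i & smod (A l l) = c.
Proof.
rewrite sadj_diag sdet_minor_sshift.
have nz_minor : all (fun j => snonzero (ssub (SElt Spos c)
    (SElt Spos (smod (A (lift i j) (lift i j)))))) (index_enum 'I_n.-1).
  by apply/allP => j _; exact: snonzero_ssub_pos.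
apply: iff_trans (sbalanced_big_smul nz_minor) _.
split=> [[j _ /(ssub_pos_balanced le_total) eq_c]|[l]].
  by exists (lift i j); rewrite // eq_sym neq_lift.
case: (unliftP i l) => [j ->|->]; last by rewrite eqxx.
by move=> _ eq_c; exists j; [exact: mem_index_enum | exact/(ssub_pos_balanced le_total)].
Qed.

End ShiftedTPD.

Theorem proposition5p1 (G : porderZmodType) (HG : divisible_toag G)
  (n : nat) (A : 'M[smax G]_n) (k : 'I_n) :
  sTPD A ->
  (forall i j : 'I_n, nat_of_ord j = (nat_of_ord i).+1 -> spreceq (A j j) (A i i)) ->
  let B := sshift (A k k) A in
  (forall i, sadj B i i <> SZero) /\
  (forall i, i != k -> sbalanced (sadj B i i)) /\
  (sbalanced (sadj B k k) <-> ~ ssimple_eig A k).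
Proof.
case: HG => le_total lerD2r _ tpd _ B; rewrite /B [A k k](sTPD_diag tpd).
split; first exact: sadj_sshift_diag_neq0.
split=> [i neq_ik|].
  by apply/sadj_sshift_diag_balanced => //; exists k; rewrite // eq_sym.
exact: iff_trans (sadj_sshift_diag_balanced le_total lerD2r tpd _ k)
                 (iff_sym (not_ssimple_eig tpd k)).
Qed.
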